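(* Let $x,y,z$ be fixed roots of unity different from $1$, and let $S\subseteq\mathbb{P}_3$ be the surface defined by $\mathcal{E}^*(a,b,c,d)=0$, where $\mathcal{E}^*$ is obtained from \[\mathcal{E}=B_2^2-A_1B_1B_2+(A_1^2-2A_2)B_2+A_2B_1^2-A_1A_2B_1+A_2^2\] by substituting $A_1=\tfrac{y-x}{y-1}a+\tfrac{xy-1}{y-1}b$, $A_2=xab$, $B_1=\tfrac{z-x}{z-1}c+\tfrac{xz-1}{z-1}d$, $B_2=xcd$. Then $S$ is defined over $\mathbb{Q}$ if and only if either $x^4=y^4=z^4=1$ or $x^6=y^6=z^6=1$.
   Context: $a,b,c,d$ are homogeneous coordinates on $\mathbb{P}_3$; $\mathcal{E}^*$ is homogeneous of degree $4$ with coefficients in $\mathbb{Q}(x,y,z)$. $S$ is defined over $\mathbb{Q}$ if $\mathcal{E}^*$ is a nonzero scalar multiple of a polynomial with rational coefficients. *)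

From HB Require Import structures.
From mathcomp Require Import all_boot all_order all_algebra all_field.
From mathcomp Require Export mpoly.
Set Implicit Arguments. Unset Strict Implicit. Unset Printing Implicit Defensive.
Import Order.TTheory GRing.Theory Num.Theory.
Local Open Scope ring_scope.

Definition is_root_of_unity (x : algC) : Prop := exists2 n : nat, (0 < n)%N & x ^+ n = 1.

(* Homogeneous coordinates a, b, c, d on P_3 are the variables 'X_0 .. 'X_3. *)
Definition va : {mpoly algC[4]} := 'X_(inord 0).
Definition vb : {mpoly algC[4]} := 'X_(inord 1).
Definition vc : {mpoly algC[4]} := 'X_(inord 2).
Definition vd : {mpoly algC[4]} := 'X_(inord 3).

Definition A1 (x y : algC) : {mpoly algC[4]} :=
  ((y - x) / (y - 1)) *: va + ((x * y - 1) / (y - 1)) *: vb.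
Definition A2 (x : algC) : {mpoly algC[4]} := x *: (va * vb).
Definition B1 (x z : algC) : {mpoly algC[4]} :=
  ((z - x) / (z - 1)) *: vc + ((x * z - 1) / (z - 1)) *: vd.
Definition B2 (x : algC) : {mpoly algC[4]} := x *: (vc * vd).

Definition Epoly (a1 a2 b1 b2 : {mpoly algC[4]}) : {mpoly algC[4]} :=
  b2 ^+ 2 - a1 * b1 * b2 + (a1 ^+ 2 - 2%:R * a2) * b2 + a2 * b1 ^+ 2
  - a1 * a2 * b1 + a2 ^+ 2.

Definition Estar (x y z : algC) : {mpoly algC[4]} :=
  Epoly (A1 x y) (A2 x) (B1 x z) (B2 x).

(* S = {E^* = 0} is defined over Q: E^* is a nonzero scalar multiple of a
   polynomial with rational coefficients. *)
Definition defined_over_Q (P : {mpoly algC[4]}) : Prop :=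
  exists2 lam : algC, lam != 0 &
    exists2 p : {mpoly algC[4]}, p \is a mpolyOver 4 Crat & P = lam *: p.

(* Write rho t = (1 + t) / (1 - t), p = rho x, q = rho y, r = rho z and
   w = (1 - x) / 2.  Then A1 = w ((p - q) a + (p + q) b), A2 = w^2 (p^2 - 1) a b,
   and likewise B1, B2 with r and c, d; so E* = w^4 E_1(p, q, r), where E_k(p, q, r)
   is weighted homogeneous of degree 4 when k has weight 2 and p, q, r weight 1.
   If E* is defined over Q, the ratios of its values at integral points are rational,
   and a few such points show that all products of two of p, q, r are rational.
   For a root of unity t <> 1, rationality of rho(t)^2 makes the algebraic integer
   t + 1/t rational, hence in {-2, ..., 2}: either t^4 = 1 and rho(t)^2 is 0 or -1,
   or t^6 = 1 and rho(t)^2 is 0, -3 or -1/3.  As 3 is not a rational square, the two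
   families cannot be mixed.  Conversely, for mu = sqrt(-1) or mu = sqrt(-3)
   respectively, p / mu, q / mu, r / mu and mu^2 are rational, and
   E_1(p, q, r) = mu^4 E_(mu^-2)(p / mu, q / mu, r / mu) has rational coefficients. *)

From HB Require Import structures.
From mathcomp Require Import all_boot all_order all_algebra all_field.
From mathcomp Require Import mpoly.
From mathcomp Require Import zify ring.
Import Order.TTheory GRing.Theory Num.Theory.
Set Implicit Arguments.
Unset Strict Implicit.
Unset Printing Implicit Defensive.
Local Open Scope ring_scope.

Definition Eform (R : comRingType) (a1 a2 b1 b2 : R) : R :=
  b2 ^+ 2 - a1 * b1 * b2 + (a1 ^+ 2 - 2%:R * a2) * b2 + a2 * b1 ^+ 2
  - a1 * a2 * b1 + a2 ^+ 2.

Lemma EpolyE : Epoly = @Eform _.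
Proof. by []. Qed.

Lemma EformM (R : comRingType) (w a1 a2 b1 b2 : R) :
  Eform (w * a1) (w ^+ 2 * a2) (w * b1) (w ^+ 2 * b2) = w ^+ 4 * Eform a1 a2 b1 b2.
Proof. by rewrite /Eform; ring. Qed.

Lemma EformZ (R : comRingType) (A : comAlgType R) (w : R) (a1 a2 b1 b2 : A) :
  Eform (w *: a1) (w ^+ 2 *: a2) (w *: b1) (w ^+ 2 *: b2) =
  w ^+ 4 *: Eform a1 a2 b1 b2.
Proof.
have algX n : (w ^+ n)%:A = w%:A ^+ n :> A := rmorphXn (in_alg A) n w.
by rewrite -[w *: a1]mulr_algl -[w *: b1]mulr_algl -[_ *: a2]mulr_algl
  -[_ *: b2]mulr_algl -[RHS]mulr_algl !algX EformM.
Qed.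

Lemma rmorph_Eform (R S : comRingType) (f : {rmorphism R -> S}) a1 a2 b1 b2 :
  f (Eform a1 a2 b1 b2) = Eform (f a1) (f a2) (f b1) (f b2).
Proof. by rewrite /Eform !(rmorphXn, rmorphB, rmorphD, rmorphM, rmorph1). Qed.

Lemma rpred_Eform (R : comRingType) (S : subringClosed R) a1 a2 b1 b2 :
  a1 \in S -> a2 \in S -> b1 \in S -> b2 \in S -> Eform a1 a2 b1 b2 \in S.
Proof. by move=> *; rewrite /Eform !(rpredB, rpredD, rpredM, rpredX, rpred1). Qed.

Definition rho (t : algC) : algC := (1 + t) / (1 - t).

Lemma rho_sqr_sub1 t : t != 1 -> rho t ^+ 2 - 1 = 4 * t / (1 - t) ^+ 2.
Proof. by move=> t1; rewrite /rho; field; rewrite subr_eq0 eq_sym. Qed.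

Lemma rho_sub_coef x t : x != 1 -> t != 1 ->
  (t - x) / (t - 1) = (1 - x) / 2 * (rho x - rho t).
Proof.
by move=> x1 t1; rewrite /rho; field; rewrite !subr_eq0 !(eq_sym 1) x1 t1.
Qed.

Lemma rho_add_coef x t : x != 1 -> t != 1 ->
  (x * t - 1) / (t - 1) = (1 - x) / 2 * (rho x + rho t).
Proof.
by move=> x1 t1; rewrite /rho; field; rewrite !subr_eq0 !(eq_sym 1) x1 t1.
Qed.

Definition Ehom (k p q r : algC) : {mpoly algC[4]} :=
  Epoly ((p - q) *: va + (p + q) *: vb) ((p ^+ 2 - k) *: (va * vb))
        ((p - r) *: vc + (p + r) *: vd) ((p ^+ 2 - k) *: (vc * vd)).

Lemma Ehom_scale (w k p q r : algC) :
  Ehom (w ^+ 2 * k) (w * p) (w * q) (w * r) = w ^+ 4 *: Ehom k p q r.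
Proof.
by rewrite /Ehom EpolyE -EformZ !scalerDr !scalerA -!mulrBr -!mulrDr exprMn -mulrBr.
Qed.

Lemma Ehom_mpolyOver k p q r : k \in Crat -> p \in Crat -> q \in Crat -> r \in Crat ->
  Ehom k p q r \is a mpolyOver 4 Crat.
Proof.
move=> kQ pQ qQ rQ; rewrite /Ehom EpolyE; apply: rpred_Eform;
  repeat (apply: rpredD || apply: rpredB || rewrite rpredN || apply: rpredM
          || apply: rpredX || apply: mpolyOverZ || apply: mpolyOverX || assumption).
Qed.

Lemma Estar_Ehom x y z : x != 1 -> y != 1 -> z != 1 ->
  Estar x y z = ((1 - x) / 2) ^+ 4 *: Ehom 1 (rho x) (rho y) (rho z).
Proof.
move=> x1 y1 z1; pose w := (1 - x) / 2.
have eA1 : A1 x y = w *: ((rho x - rho y) *: va + (rho x + rho y) *: vb).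
  by rewrite /A1 rho_sub_coef // rho_add_coef // scalerDr !scalerA.
have eB1 : B1 x z = w *: ((rho x - rho z) *: vc + (rho x + rho z) *: vd).
  by rewrite /B1 rho_sub_coef // rho_add_coef // scalerDr !scalerA.
have ex : x = w ^+ 2 * (rho x ^+ 2 - 1).
  by rewrite rho_sqr_sub1 // /w; field; rewrite subr_eq0 eq_sym.
have eA2 : A2 x = w ^+ 2 *: ((rho x ^+ 2 - 1) *: (va * vb)) by rewrite scalerA -ex.
have eB2 : B2 x = w ^+ 2 *: ((rho x ^+ 2 - 1) *: (vc * vd)) by rewrite scalerA -ex.
by rewrite /Estar eA1 eA2 eB1 eB2 EpolyE EformZ.
Qed.

Lemma defined_over_QZ (c : algC) (P : {mpoly algC[4]}) :
  c != 0 -> defined_over_Q (c *: P) <-> defined_over_Q P.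
Proof.
move=> c0; split=> [[l l0 [p pQ eP]] | [l l0 [p pQ ->]]].
  exists (c^-1 * l); first by rewrite mulf_neq0 ?invr_eq0.
  by exists p => //; rewrite -scalerA -eP scalerA mulVf ?scale1r.
by exists (c * l); [rewrite mulf_neq0 | exists p; rewrite // scalerA].
Qed.

Lemma Ehom_over_Q (mu p q r : algC) : mu != 0 -> mu ^+ 2 \in Crat ->
  p / mu \in Crat -> q / mu \in Crat -> r / mu \in Crat ->
  defined_over_Q (Ehom 1 p q r).
Proof.
move=> mu0 mu2Q pQ qQ rQ.
have -> : Ehom 1 p q r = mu ^+ 4 *: Ehom (mu ^+ 2)^-1 (p / mu) (q / mu) (r / mu).
  by rewrite -Ehom_scale divff ?expf_neq0 // !(mulrC mu) !divfK.
exists (mu ^+ 4); first by rewrite expf_neq0.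
by exists (Ehom (mu ^+ 2)^-1 (p / mu) (q / mu) (r / mu)); rewrite ?Ehom_mpolyOver ?rpredV.
Qed.

Definition pt (a b c d : algC) : 'I_4 -> algC := fun i => [:: a; b; c; d]`_i.

Lemma pt_Crat a b c d : a \in Crat -> b \in Crat -> c \in Crat -> d \in Crat ->
  forall i, pt a b c d i \in Crat.
Proof. by move=> aQ bQ cQ dQ [[|[|[|[|i]]]] ?]. Qed.

Lemma Ehom_meval k p q r a b c d :
  (Ehom k p q r).@[pt a b c d] =
  Eform ((p - q) * a + (p + q) * b) ((p ^+ 2 - k) * (a * b))
        ((p - r) * c + (p + r) * d) ((p ^+ 2 - k) * (c * d)).
Proof.
by rewrite /Ehom EpolyE rmorph_Eform /= !(mevalD, mevalZ, mevalM) !mevalXU /pt !inordK.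
Qed.

Lemma defined_over_Q_meval_div (P : {mpoly algC[4]}) (v w : 'I_4 -> algC) :
  defined_over_Q P -> (forall i, v i \in Crat) -> (forall i, w i \in Crat) ->
  P.@[w] != 0 -> P.@[v] / P.@[w] \in Crat.
Proof.
move=> [l l0 [p pQ ->]] vQ wQ; rewrite !mevalZ mulf_eq0 negb_or l0 /= => pw0.
rewrite invfM mulrACA divff // mul1r rpred_div // rpred_mhorner //; exact/forallP.
Qed.

Section RationalEhom.
Variables p q r : algC.
Hypothesis p2_neq1 : p ^+ 2 != 1.
Hypothesis Ehom_Q : defined_over_Q (Ehom 1 p q r).

Let m_neq0 : p ^+ 2 - 1 != 0. Proof. by rewrite subr_eq0. Qed.

Let F (a b c d : int) :=
  (Ehom 1 p q r).@[pt a%:~R b%:~R c%:~R d%:~R] / (p ^+ 2 - 1) ^+ 2.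

Let F_Crat a b c d : F a b c d \in Crat.
Proof.
have base : (Ehom 1 p q r).@[pt 0 0 1 1] = (p ^+ 2 - 1) ^+ 2.
  by rewrite Ehom_meval /Eform; ring.
rewrite /F -base; apply: defined_over_Q_meval_div => //.
- by apply: pt_Crat; apply: rpred_int.
- by apply: pt_Crat; rewrite ?rpred0 ?rpred1.
- by rewrite base expf_neq0.
Qed.

Lemma Ehom_sqr_sub1_Crat : p ^+ 2 - 1 \in Crat.
Proof.
have F_pp : F 1 1 (-1) (-1) - 16 = 16 / (p ^+ 2 - 1).
  by rewrite /F Ehom_meval /Eform; field.
have -> : p ^+ 2 - 1 = 16 / (F 1 1 (-1) (-1) - 16).
  by rewrite F_pp invf_div mulrC divfK // pnatr_eq0.
by rewrite rpred_div ?rpredB ?rpred_nat.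
Qed.

(* At the integral points used below, F is a constant plus a combination of at
   most three products of p, q, r, divided by p^2 - 1. *)
Lemma Ehom_mul_Crat : {in [:: p; q; r] &, forall s t, s * t \in Crat}.
Proof.
have mQ := Ehom_sqr_sub1_Crat.
have pp : p * p \in Crat.
  have -> : p * p = F 1 1 (-1) (-1) / 16 * (p ^+ 2 - 1).
    by rewrite /F Ehom_meval /Eform; field.
  exact: rpredM (rpred_div (F_Crat _ _ _ _) (rpred_nat _ 16)) mQ.
have qq : q * q \in Crat.
  have -> : q * q = (F 1 0 1 1 - 1) * (p ^+ 2 - 1) + p * p.
    by rewrite /F Ehom_meval /Eform; field.
  exact: rpredD (rpredM (rpredB (F_Crat _ _ _ _) (rpred1 _)) mQ) pp.
have rr : r * r \in Crat.
  have -> : r * r = (F 1 1 1 0 - 1) * (p ^+ 2 - 1) + p * p.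
    by rewrite /F Ehom_meval /Eform; field.
  exact: rpredD (rpredM (rpredB (F_Crat _ _ _ _) (rpred1 _)) mQ) pp.
have FB_Crat a b c d a' b' c' d' :
    (F a b c d - F a' b' c' d') * (p ^+ 2 - 1) / 4 \in Crat.
  exact: rpred_div (rpredM (rpredB (F_Crat _ _ _ _) (F_Crat _ _ _ _)) mQ) (rpred_nat _ 4).
have pq : p * q \in Crat.
  have -> : p * q = p * p - (F 1 0 (-1) (-1) - F 1 0 1 1) * (p ^+ 2 - 1) / 4.
    by rewrite /F !Ehom_meval /Eform; field.
  exact: rpredB pp (FB_Crat _ _ _ _ _ _ _ _).
have pr : p * r \in Crat.
  have -> : p * r = p * p - (F (-1) (-1) 1 0 - F 1 1 1 0) * (p ^+ 2 - 1) / 4.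
    by rewrite /F !Ehom_meval /Eform; field.
  exact: rpredB pp (FB_Crat _ _ _ _ _ _ _ _).
have qr : q * r \in Crat.
  have -> : q * r = (F 1 (-1) 1 (-1) * (p ^+ 2 - 1) + 4 * (q * q) + 4 * (r * r)) / 8.
    by rewrite /F Ehom_meval /Eform; field.
  apply: rpred_div (rpred_nat _ 8); apply: rpredD (rpredM (rpred_nat _ 4) rr).
  exact: rpredD (rpredM (F_Crat _ _ _ _) mQ) (rpredM (rpred_nat _ 4) qq).
by move=> s t; rewrite !inE => /or3P[]/eqP-> /or3P[]/eqP->; rewrite // mulrC.
Qed.

End RationalEhom.

Lemma root_of_unity_neq0 t : is_root_of_unity t -> t != 0.
Proof.
case=> n n0 tn; apply/eqP => t0; move: tn.
by rewrite t0 expr0n gtn_eqF //= => /eqP; rewrite eq_sym oner_eq0.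
Qed.

Lemma norm_root_of_unity t : is_root_of_unity t -> `|t| = 1.
Proof.
case=> n n0 tn; apply/eqP.
by rewrite -(pexpr_eq1 n0 (normr_ge0 t)) -normrX tn normr1.
Qed.

Lemma root_of_unity_trace_int t : is_root_of_unity t -> t + t^-1 \in Crat ->
  exists2 m : int, -2 <= m <= 2 & t + t^-1 = m%:~R.
Proof.
move=> ut tQ; have [n n0 tn] := ut.
have tA : t \in Aint by apply: (Aint_unity_root n0); apply/unity_rootP.
have tVA : t^-1 \in Aint.
  by apply: (Aint_unity_root n0); apply/unity_rootP; rewrite exprVn tn invr1.
have /intrP [m tm] : t + t^-1 \in Num.int by apply: Cint_rat_Aint => //; apply: rpredD.
exists m => //; rewrite -ler_norml -(ler_int algC) intr_norm -tm.
apply: le_trans (ler_normD _ _) _.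
by rewrite normfV norm_root_of_unity // invr1.
Qed.

Lemma root_of_unity_trace_Crat t : is_root_of_unity t -> t + t^-1 \in Crat ->
  t ^+ 4 = 1 \/ t ^+ 6 = 1.
Proof.
move=> ut tQ; have t0 := root_of_unity_neq0 ut.
have [m m2 tm] := root_of_unity_trace_int ut tQ.
have quad : t ^+ 2 + 1 - m%:~R * t = 0 by rewrite -tm; field.
suff [Q eQ] : exists Q, (t ^+ 4 - 1) * (t ^+ 6 - 1) = (t ^+ 2 + 1 - m%:~R * t) * Q.
  move: eQ; rewrite quad mul0r => /eqP; rewrite mulf_eq0 !subr_eq0.
  by case/orP=> /eqP; [left | right].
have : m = -2 \/ m = -1 \/ m = 0 \/ m = 1 \/ m = 2 by lia.
case=> [->|[->|[->|[->|->]]]].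
- by exists ((t ^+ 3 - t ^+ 2 + t - 1) * (t ^+ 5 - t ^+ 4 + t ^+ 3 - t ^+ 2 + t - 1)); ring.
- by exists ((t ^+ 4 - 1) * (t - 1) * (t ^+ 3 + 1)); ring.
- by exists ((t ^+ 2 - 1) * (t ^+ 6 - 1)); ring.
- by exists ((t ^+ 4 - 1) * (t + 1) * (t ^+ 3 - 1)); ring.
- by exists ((t ^+ 3 + t ^+ 2 + t + 1) * (t ^+ 5 + t ^+ 4 + t ^+ 3 + t ^+ 2 + t + 1)); ring.
Qed.

Lemma rho_sqr_neq1 t : t != 0 -> t != 1 -> rho t ^+ 2 != 1.
Proof.
move=> t0 t1; rewrite -subr_eq0 rho_sqr_sub1 //.
by rewrite !mulf_neq0 ?pnatr_eq0 ?invr_eq0 ?expf_neq0 // subr_eq0 eq_sym.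
Qed.

Lemma trace_rho t : t != 0 -> t != 1 ->
  t + t^-1 = 2 * (rho t ^+ 2 + 1) / (rho t ^+ 2 - 1).
Proof.
move=> t0 t1; rewrite rho_sqr_sub1 // /rho; field.
by rewrite t0 subr_eq0 eq_sym t1.
Qed.

Lemma root_of_unity_rho_Crat t : is_root_of_unity t -> t != 1 ->
  rho t ^+ 2 \in Crat -> t ^+ 4 = 1 \/ t ^+ 6 = 1.
Proof.
move=> ut t1 rQ; apply: root_of_unity_trace_Crat => //.
rewrite trace_rho ?root_of_unity_neq0 //.
apply: rpred_div (rpredB rQ (rpred1 _)).
exact: rpredM (rpred_nat _ 2) (rpredD rQ (rpred1 _)).
Qed.

Lemma root4_rho t : t != 1 -> (t ^+ 4 == 1) = (rho t == 0) || (rho t ^+ 2 == -1).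
Proof.
move=> t1; have t1' : 1 - t != 0 by rewrite subr_eq0 eq_sym.
have -> : (rho t == 0) || (rho t ^+ 2 == -1) = (2 * (1 - t ^+ 4) / (1 - t) ^+ 4 == 0).
  by rewrite -addr_eq0 -mulf_eq0; congr (_ == 0); rewrite /rho; field.
by rewrite !mulf_eq0 invr_eq0 expf_eq0 (negbTE t1') pnatr_eq0 /= orbF subr_eq0 eq_sym.
Qed.

Lemma root6_rho t : t != 1 ->
  (t ^+ 6 == 1) = [|| rho t == 0, rho t ^+ 2 == -3 | 3 * rho t ^+ 2 == -1].
Proof.
move=> t1; have t1' : 1 - t != 0 by rewrite subr_eq0 eq_sym.
have -> : [|| rho t == 0, rho t ^+ 2 == -3 | 3 * rho t ^+ 2 == -1] =
          (16 * (1 - t ^+ 6) / (1 - t) ^+ 6 == 0).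
  by rewrite -!addr_eq0 -!mulf_eq0; congr (_ == 0); rewrite /rho; field.
by rewrite !mulf_eq0 invr_eq0 expf_eq0 (negbTE t1') pnatr_eq0 /= orbF subr_eq0 eq_sym.
Qed.

Lemma Crat_sqr_neq3 q : q \in Crat -> q ^+ 2 != 3.
Proof.
move=> qQ; apply/eqP => q2.
have qA : q \in Aint.
  apply: (@root_monic_Aint ('X^2 - 3%:P)); first by rewrite rootE !hornerE q2 subrr.
    exact: monicXnsubC.
  by rewrite polyOverXnsubC rpred_nat.
have /intrP [m qm] := Cint_rat_Aint qQ qA.
move: q2; rewrite qm -rmorphXn -[3 : algC]/(3%:~R) => /intr_inj; rewrite expr2 => m2.
have : m <= -2 \/ -1 <= m <= 1 \/ 2 <= m by lia.
by case=> [|[/andP[]|]] *; nia.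
Qed.

Lemma rho_mul_Crat_root4_root6 s t : s != 1 -> t != 1 -> s ^+ 4 = 1 -> t ^+ 6 = 1 ->
  rho s * rho t \in Crat -> s ^+ 6 = 1 \/ t ^+ 4 = 1.
Proof.
move=> s1 t1 /eqP; rewrite root4_rho // => /orP[/eqP rs0 _ _ | /eqP rs2].
  by left; apply/eqP; rewrite root6_rho // rs0 eqxx.
move=> /eqP; rewrite root6_rho // => /or3P[/eqP rt0 | /eqP rt2 | /eqP rt2] stQ.
- by right; apply/eqP; rewrite root4_rho // rt0 eqxx.
- have /eqP[] := Crat_sqr_neq3 stQ.
  by rewrite exprMn rs2 rt2 mulrNN mul1r.
- have /eqP[] := Crat_sqr_neq3 (rpredM (rpred_nat _ 3) stQ).
  have -> : (3 * (rho s * rho t)) ^+ 2 = 3 * (rho s ^+ 2 * (3 * rho t ^+ 2)) by ring.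
  by rewrite rs2 rt2 mulrNN !mulr1.
Qed.

Lemma roots_of_unity_rho_mul_Crat (ts : seq algC) :
  {in ts, forall t, is_root_of_unity t} -> {in ts, forall t, t != 1} ->
  {in ts &, forall s t, rho s * rho t \in Crat} ->
  {in ts, forall t, t ^+ 4 = 1} \/ {in ts, forall t, t ^+ 6 = 1}.
Proof.
move=> tsU ts1 tsQ.
have ts46 : {in ts, forall t, t ^+ 4 = 1 \/ t ^+ 6 = 1}.
  move=> t tin; apply: root_of_unity_rho_Crat; [exact: tsU | exact: ts1 |].
  by rewrite expr2 tsQ.
have [all4 | /allPn[t0 t0in /eqP t0_4]] := boolP (all (fun t => t ^+ 4 == 1) ts).
  by left=> t /(allP all4)/eqP.
right=> s sin; have t0_6 : t0 ^+ 6 = 1 by case: (ts46 t0 t0in).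
case: (ts46 s sin) => // s4.
by case: (rho_mul_Crat_root4_root6 (ts1 s sin) (ts1 t0 t0in) s4 t0_6 (tsQ s t0 sin t0in)).
Qed.

Lemma rho_div_Crat t mu c : mu != 0 -> c \in Crat ->
  rho t ^+ 2 = c ^+ 2 * mu ^+ 2 -> rho t / mu \in Crat.
Proof.
move=> mu0 cQ rt; have : (rho t / mu) ^+ 2 == c ^+ 2.
  by rewrite expr_div_n rt mulfK ?expf_neq0.
by rewrite eqf_sqr => /orP[]/eqP->; rewrite ?rpredN.
Qed.

Lemma roots46_rho_div_Crat (ts : seq algC) : {in ts, forall t, t != 1} ->
  {in ts, forall t, t ^+ 4 = 1} \/ {in ts, forall t, t ^+ 6 = 1} ->
  exists2 mu, mu != 0 & mu ^+ 2 \in Crat /\ {in ts, forall t, rho t / mu \in Crat}.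
Proof.
have rho0 t mu : mu != 0 -> rho t = 0 -> rho t / mu \in Crat.
  by move=> mu0 ->; rewrite mul0r rpred0.
move=> ts1 [ts4 | ts6].
  exists 'i; first exact: neq0Ci.
  split=> [|t tin]; first by rewrite sqrCi rpredN rpred1.
  move: (ts4 t tin) => /eqP; rewrite root4_rho ?ts1 // => /orP[]/eqP rt.
    by rewrite rho0 ?neq0Ci.
  by apply: (@rho_div_Crat _ _ 1); rewrite ?neq0Ci ?rpred1 // sqrCi rt expr1n mul1r.
have mu0 : sqrtC (-3 : algC) != 0 by rewrite sqrtC_eq0 oppr_eq0 pnatr_eq0.
exists (sqrtC (-3)) => //; split=> [|t tin]; first by rewrite sqrtCK rpredN rpred_nat.
move: (ts6 t tin) => /eqP; rewrite root6_rho ?ts1 // => /or3P[]/eqP rt.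
- by rewrite rho0.
- by apply: (@rho_div_Crat _ _ 1); rewrite ?rpred1 // sqrtCK rt expr1n mul1r.
- apply: (@rho_div_Crat _ _ 3^-1); rewrite ?rpredV ?rpred_nat // sqrtCK.
  have -> : rho t ^+ 2 = (3 * rho t ^+ 2) / 3 by field.
  by rewrite rt; field.
Qed.

Lemma all3P (P : algC -> Prop) x y z :
  {in [:: x; y; z], forall t, P t} <-> P x /\ P y /\ P z.
Proof.
split=> [Pxyz | [Px [Py Pz]] t]; last by rewrite !inE => /or3P[]/eqP->.
by split; [|split]; apply: Pxyz; rewrite !inE eqxx ?orbT.
Qed.

Theorem propositionA3 (x y z : algC) :
  is_root_of_unity x -> is_root_of_unity y -> is_root_of_unity z ->
  x != 1 -> y != 1 -> z != 1 ->
  (defined_over_Q (Estar x y z) <->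
   ((x ^+ 4 = 1 /\ y ^+ 4 = 1 /\ z ^+ 4 = 1) \/
    (x ^+ 6 = 1 /\ y ^+ 6 = 1 /\ z ^+ 6 = 1))).
Proof.
move=> ux uy uz x1 y1 z1.
rewrite Estar_Ehom // defined_over_QZ; last first.
  by rewrite expf_neq0 // mulf_neq0 ?invr_eq0 ?pnatr_eq0 // subr_eq0 eq_sym.
have xyz1 : {in [:: x; y; z], forall t, t != 1} by apply/all3P.
split=> [EQ | xyz46].
  have rhoQ := Ehom_mul_Crat (rho_sqr_neq1 (root_of_unity_neq0 ux) x1) EQ.
  have [||s t sin tin|H|H] := @roots_of_unity_rho_mul_Crat [:: x; y; z].
  - exact/all3P.
  - exact: xyz1.
  - by apply: rhoQ; [exact: (map_f rho sin) | exact: (map_f rho tin)].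
  - by left; apply/(all3P (fun t => t ^+ 4 = 1)).
  - by right; apply/(all3P (fun t => t ^+ 6 = 1)).
have {}xyz46 : {in [:: x; y; z], forall t, t ^+ 4 = 1} \/
                {in [:: x; y; z], forall t, t ^+ 6 = 1}.
  by case: xyz46 => [/(all3P (fun t => t ^+ 4 = 1)) | /(all3P (fun t => t ^+ 6 = 1))];
    [left | right].
have [mu mu0 [mu2Q rhoQ]] := roots46_rho_div_Crat xyz1 xyz46.
by apply: (Ehom_over_Q mu0 mu2Q); apply: rhoQ; rewrite !inE eqxx ?orbT.
Qed.
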